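(* Let $d=1$. (1) If $y\in\mathbb{Q}$, then $\Pi^{y}=\{x\in\mathbb{Q}:(\mathbb{Z}x+y)\cap\mathbb{Z}\neq\emptyset\}$. (2) If $x\in\mathbb{Q}$, then $\Phi(x)=\{y\in\mathbb{Q}:(\mathbb{Z}x+y)\cap\mathbb{Z}\neq\emptyset\}$.
   Context: For $t\in\mathbb{R}$, $\|t\|$ is the distance from $t$ to $\mathbb{Z}$. Write $\mathbb{N}=\{1,2,\dots\}$. $\mathcal{D}$ is the set of all non-increasing $\psi:\mathbb{N}\to\mathbb{R}_{\ge0}$ with $\sum_n\psi(n)=\infty$. $W(\psi)$ is the set of $(x,y)\in\mathbb{R}^2$ with $\|nx+y\|<\psi(n)$ for infinitely many $n\in\mathbb{N}$, and $\Pi=\bigcap_{\psi\in\mathcal{D}}W(\psi)$. $\Phi(x)=\{y\in\mathbb{R}:(x,y)\in\Pi\}$ and $\Pi^{y}=\{x\in\mathbb{R}:(x,y)\in\Pi\}$. $\mathbb{Z}x+y=\{kx+y:k\in\mathbb{Z}\}$. *)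

From Stdlib Require Import Reals ZArith.
Open Scope R_scope.

(* ||t|| : distance from t to the nearest integer.
   With f = t - floor t in [0,1), the distance is min(f, 1 - f). *)
Definition distZ (t : R) : R :=
  Rmin (t - IZR (Int_part t)) (1 - (t - IZR (Int_part t))).

(* psi : N -> R_{>=0}, with N = {1,2,...}; we use psi : nat -> R and
   ignore the value at 0. *)
Definition in_D (psi : nat -> R) : Prop :=
  (forall n : nat, (1 <= n)%nat -> 0 <= psi n) /\
  (forall m n : nat, (1 <= m)%nat -> (m <= n)%nat -> psi n <= psi m) /\
  (forall M : R, exists N : nat, M < sum_f 1 N psi).

Definition in_W (psi : nat -> R) (x y : R) : Prop :=
  forall N : nat, exists n : nat,
    (N <= n)%nat /\ (1 <= n)%nat /\ distZ (INR n * x + y) < psi n.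

Definition in_Pi (x y : R) : Prop :=
  forall psi : nat -> R, in_D psi -> in_W psi x y.

Definition Phi (x : R) : R -> Prop := fun y => in_Pi x y.
Definition Pi_y (y : R) : R -> Prop := fun x => in_Pi x y.

Definition is_rational (x : R) : Prop :=
  exists p q : Z, (0 < q)%Z /\ x = IZR p / IZR q.

Definition orbit_hits_Z (x y : R) : Prop :=
  exists k m : Z, IZR k * x + y = IZR m.

From Stdlib Require Import Reals ZArith Lra Lia Psatz Classical.
Open Scope R_scope.

(* If x = p/q and k x + y is an integer, then so is n x + y for every n = k mod q,
   and every psi in D is positive, so (x, y) lies in each W(psi).  Otherwise we
   exhibit a psi in D with psi n <= ||n x + y|| for all n >= 1.  For x = p/q and
   y = a/b with the orbit missing Z, ||n x + y|| >= 1/(q b); for x = p/q and y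
   irrational, ||n x + y|| >= ||q y||/q; a constant psi works in both cases.  For
   x irrational and y = a/b, ||n x + y|| >= ||n b x||/b, and psi n =
   min_{m <= n} ||m b x|| / b has a divergent sum: Farey brackets of b x that
   are balanced (both gaps within a factor 2) give arbitrarily large s with
   ||m b x|| >= 1/(2 s) for all m < s. *)

Lemma distZ_le_abs (t : R) (m : Z) : distZ t <= Rabs (t - IZR m).
Proof.
  unfold distZ. destruct (base_Int_part t) as [H1 H2].
  set (z := Int_part t) in *.
  destruct (Z_le_gt_dec m z) as [Hm|Hm].
  - apply IZR_le in Hm. rewrite Rabs_right by lra.
    apply Rle_trans with (t - IZR z); [apply Rmin_l | lra].
  - assert (Hm' : (z + 1 <= m)%Z) by lia. apply IZR_le in Hm'.
    rewrite plus_IZR in Hm'. rewrite Rabs_left1 by lra.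
    apply Rle_trans with (1 - (t - IZR z)); [apply Rmin_r | lra].
Qed.

Lemma distZ_attained (t : R) : exists m : Z, distZ t = Rabs (t - IZR m).
Proof.
  unfold distZ. destruct (base_Int_part t) as [H1 H2].
  set (z := Int_part t) in *.
  destruct (Rle_dec (t - IZR z) (1 - (t - IZR z))) as [H|H].
  - exists z. rewrite Rmin_left, Rabs_right by lra. reflexivity.
  - exists (z + 1)%Z. rewrite Rmin_right, plus_IZR, Rabs_left1 by lra. ring.
Qed.

Lemma distZ_ge0 (t : R) : 0 <= distZ t.
Proof. destruct (distZ_attained t) as [m ->]. apply Rabs_pos. Qed.

Lemma distZ_IZR (m : Z) : distZ (IZR m) = 0.
Proof.
  apply Rle_antisym; [|apply distZ_ge0].
  rewrite <- (Rabs_R0), <- (Rminus_diag (IZR m)). apply distZ_le_abs.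
Qed.

Lemma distZ_add_IZR (t : R) (k : Z) : distZ (t + IZR k) = distZ t.
Proof.
  destruct (distZ_attained t) as [m Hm], (distZ_attained (t + IZR k)) as [m' Hm'].
  apply Rle_antisym.
  - rewrite Hm. replace (t - IZR m) with (t + IZR k - IZR (m + k)) by (rewrite plus_IZR; ring).
    apply distZ_le_abs.
  - rewrite Hm'. replace (t + IZR k - IZR m') with (t - IZR (m' - k))
      by (rewrite minus_IZR; ring).
    apply distZ_le_abs.
Qed.

Lemma distZ_mul_le (k : Z) (t : R) : distZ (IZR k * t) <= Rabs (IZR k) * distZ t.
Proof.
  destruct (distZ_attained t) as [m ->]. rewrite <- Rabs_mult.
  replace (IZR k * (t - IZR m)) with (IZR k * t - IZR (k * m)) by (rewrite mult_IZR; ring).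
  apply distZ_le_abs.
Qed.

Lemma distZ_pos (t : R) : (forall m : Z, t <> IZR m) -> 0 < distZ t.
Proof.
  intros Hnot. destruct (distZ_attained t) as [m ->].
  apply Rabs_pos_lt. intro E. apply (Hnot m). lra.
Qed.

Lemma distZ_ge_inv_den (k : Z) (t : R) : (1 <= k)%Z ->
  (exists K : Z, IZR k * t = IZR K) -> (forall m : Z, t <> IZR m) -> / IZR k <= distZ t.
Proof.
  intros Hk [K HK] Hnot. destruct (distZ_attained t) as [m ->].
  assert (Hk0 : 0 < IZR k) by (apply IZR_lt; lia).
  assert (E : IZR k * (t - IZR m) = IZR (K - k * m)) by (rewrite minus_IZR, mult_IZR; lra).
  assert (Hne : (K - k * m <> 0)%Z).
  { intro H0. rewrite H0 in E. apply (Hnot m).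
    apply Rmult_integral in E as [E|E]; lra. }
  assert (H1 : 1 <= Rabs (IZR k * (t - IZR m))) by (rewrite E, <- abs_IZR; apply IZR_le; lia).
  rewrite Rabs_mult, Rabs_pos_eq in H1 by lra.
  apply Rmult_le_reg_l with (IZR k); [lra|]. rewrite Rinv_r by lra. exact H1.
Qed.

Lemma sum_f_R0_le_nonneg (g : nat -> R) (m n : nat) :
  (forall k, 0 <= g k) -> (m <= n)%nat -> sum_f_R0 g m <= sum_f_R0 g n.
Proof.
  intros Hg Hmn. destruct (Nat.eq_dec m n) as [->|Hne]; [lra|].
  rewrite (tech2 g m n) by lia.
  pose proof (cond_pos_sum (fun i => g (S m + i)%nat) (n - S m) (fun i => Hg _)). lra.
Qed.

Lemma sum_f_R0_block (g : nat -> R) (c : R) (N j : nat) :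
  (forall k, (N < k <= N + j)%nat -> c <= g k) ->
  sum_f_R0 g N + INR j * c <= sum_f_R0 g (N + j).
Proof.
  induction j as [|j IH]; intros Hc.
  - rewrite Nat.add_0_r. simpl. lra.
  - rewrite Nat.add_succ_r, S_INR. simpl sum_f_R0.
    assert (c <= g (S (N + j))) by (apply Hc; lia).
    assert (sum_f_R0 g N + INR j * c <= sum_f_R0 g (N + j))
      by (apply IH; intros; apply Hc; lia).
    lra.
Qed.

Lemma sum_f_R0_unbounded (g : nat -> R) (eps : R) : 0 < eps ->
  (forall N, exists N', sum_f_R0 g N + eps <= sum_f_R0 g N') ->
  forall M, exists N, M < sum_f_R0 g N.
Proof.
  intros Heps Hstep M.
  assert (Hgrow : forall K : nat, exists N, g 0%nat + INR K * eps <= sum_f_R0 g N).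
  { induction K as [|K [N HN]].
    - exists 0%nat. simpl. lra.
    - destruct (Hstep N) as [N' HN']. exists N'. rewrite S_INR. lra. }
  destruct (INR_archimed eps (M - g 0%nat) Heps) as [K HK].
  destruct (Hgrow K) as [N HN]. exists N. lra.
Qed.

Lemma in_D_pos (psi : nat -> R) : in_D psi -> forall n, (1 <= n)%nat -> 0 < psi n.
Proof.
  intros [Hnn [Hmon Hdiv]] n0 Hn0.
  destruct (Rle_lt_dec (psi n0) 0) as [Hle|]; [exfalso|assumption].
  set (g := fun k => psi (k + 1)%nat).
  assert (Hg : forall k, 0 <= g k) by (intro k; apply Hnn; lia).
  (* psi vanishes from n0 on, so its partial sums are bounded *)
  assert (Hbound : forall N, sum_f_R0 g N <= sum_f_R0 g n0).
  { induction N as [|N IH]; [apply sum_f_R0_le_nonneg; auto; lia|].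
    destruct (Nat.le_gt_cases (S N) n0); [apply sum_f_R0_le_nonneg; auto|].
    assert (g (S N) <= 0) by (apply Rle_trans with (psi n0); [apply Hmon; lia | lra]).
    simpl. lra. }
  destruct (Hdiv (sum_f_R0 g n0)) as [N HN].
  specialize (Hbound (N - 1)%nat). unfold sum_f in HN. fold g in HN. lra.
Qed.

Lemma in_D_const (c : R) : 0 < c -> in_D (fun _ => c).
Proof.
  intros Hc. split; [intros; lra | split; [intros; lra |]].
  intros M. destruct (INR_archimed c M Hc) as [N HN].
  exists (S N). unfold sum_f. replace (S N - 1)%nat with N by lia.
  rewrite sum_cte, S_INR. lra.
Qed.

Lemma in_D_div (psi : nat -> R) (c : R) : in_D psi -> 0 < c -> in_D (fun n => psi n / c).
Proof.
  intros [Hnn [Hmon Hdiv]] Hc.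
  assert (Hc' : 0 < / c) by (apply Rinv_0_lt_compat; lra).
  split; [|split].
  - intros n Hn. apply Rmult_le_pos; [apply Hnn; lia | lra].
  - intros m n Hm Hmn. apply Rmult_le_compat_r; [lra | apply Hmon; lia].
  - intros M. destruct (Hdiv (M * c)) as [N HN]. exists N.
    unfold sum_f in *. unfold Rdiv.
    rewrite <- (scal_sum (fun i => psi (i + 1)%nat) (N - 1) (/ c)).
    apply Rmult_lt_reg_l with c; [lra|].
    rewrite <- Rmult_assoc, Rinv_r, Rmult_1_l by lra. lra.
Qed.

Lemma not_in_Pi_of_le_distZ (x y : R) (psi : nat -> R) : in_D psi ->
  (forall n : nat, (1 <= n)%nat -> psi n <= distZ (INR n * x + y)) -> ~ in_Pi x y.
Proof.
  intros HD Hle HPi. destruct (HPi psi HD 0%nat) as [n [_ [Hn Hlt]]].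
  specialize (Hle n Hn). lra.
Qed.

Lemma not_in_Pi_of_distZ_lb (x y c : R) : 0 < c ->
  (forall n : nat, (1 <= n)%nat -> c <= distZ (INR n * x + y)) -> ~ in_Pi x y.
Proof. intros Hc. apply not_in_Pi_of_le_distZ, in_D_const, Hc. Qed.

Lemma irrational_mul_neq_IZR (x : R) (q p : Z) :
  ~ is_rational x -> (0 < q)%Z -> IZR q * x <> IZR p.
Proof.
  intros Hx Hq E. apply Hx. exists p, q. split; [exact Hq|].
  rewrite <- E. field. apply not_0_IZR. lia.
Qed.

Lemma in_Pi_of_orbit_hits_Z (x y : R) : is_rational x -> orbit_hits_Z x y -> in_Pi x y.
Proof.
  intros [p [q [Hq Hx]]] [k [m Hk]] psi HD N.
  set (t := (Z.abs k + Z.of_nat N + 1)%Z).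
  set (n := (k + q * t)%Z).
  assert (Hn : (Z.of_nat N + 1 <= n)%Z) by (unfold n, t; nia).
  exists (Z.to_nat n). split; [lia | split; [lia |]].
  rewrite INR_IZR_INZ, Z2Nat.id by lia.
  replace (IZR n * x + y) with (IZR (m + t * p)).
  - rewrite distZ_IZR. apply (in_D_pos psi HD). lia.
  - unfold n. rewrite !plus_IZR, !mult_IZR, <- Hk, Hx.
    field. apply not_0_IZR. lia.
Qed.

Lemma not_in_Pi_rational_miss (x y : R) : is_rational x -> is_rational y ->
  ~ orbit_hits_Z x y -> ~ in_Pi x y.
Proof.
  intros [p [q [Hq Hx]]] [a [b [Hb Hy]]] Hmiss.
  apply (not_in_Pi_of_distZ_lb x y (/ IZR (q * b))).
  { apply Rinv_0_lt_compat, IZR_lt. nia. }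
  intros n Hn. apply distZ_ge_inv_den; [nia | |].
  - exists (Z.of_nat n * p * b + a * q)%Z.
    rewrite Hx, Hy, plus_IZR, !mult_IZR, <- INR_IZR_INZ.
    field. split; apply not_0_IZR; lia.
  - intros m E. apply Hmiss. exists (Z.of_nat n), m. rewrite <- INR_IZR_INZ. exact E.
Qed.

Lemma not_in_Pi_rational_irrational (x y : R) : is_rational x -> ~ is_rational y ->
  ~ in_Pi x y.
Proof.
  intros [p [q [Hq Hx]]] Hy.
  assert (Hq0 : 0 < IZR q) by (apply IZR_lt; lia).
  apply (not_in_Pi_of_distZ_lb x y (distZ (IZR q * y) / IZR q)).
  { apply Rdiv_lt_0_compat; [|lra].
    apply distZ_pos. intros m. apply irrational_mul_neq_IZR; auto. }
  intros n Hn.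
  assert (E : IZR q * (INR n * x + y) = IZR q * y + IZR (Z.of_nat n * p)).
  { rewrite mult_IZR, <- INR_IZR_INZ, Hx. field. lra. }
  pose proof (distZ_mul_le q (INR n * x + y)) as Hmul.
  rewrite E, distZ_add_IZR, Rabs_pos_eq in Hmul by lra.
  apply Rmult_le_reg_l with (IZR q); [lra|]. unfold Rdiv.
  rewrite Rmult_comm, Rmult_assoc, Rinv_l, Rmult_1_r by lra. exact Hmul.
Qed.

(* a/b < x < c/d with a/b, c/d Farey neighbours *)
Definition farey_bracket (x : R) (a b c d : Z) : Prop :=
  (1 <= b)%Z /\ (1 <= d)%Z /\ (b * c - a * d = 1)%Z /\
  0 < IZR b * x - IZR a /\ 0 < IZR c - IZR d * x.

Definition farey_balanced (x : R) (a b c d : Z) : Prop :=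
  IZR b * x - IZR a <= 2 * (IZR c - IZR d * x) /\
  IZR c - IZR d * x <= 2 * (IZR b * x - IZR a).

Lemma farey_bracket_opp (x : R) (a b c d : Z) :
  farey_bracket x a b c d -> farey_bracket (- x) (- c) d (- a) b.
Proof.
  intros [Hb [Hd [Hdet [Hu Hv]]]]. unfold farey_bracket. rewrite !opp_IZR.
  repeat split; try lia; lra.
Qed.

Lemma farey_balanced_opp (x : R) (a b c d : Z) :
  farey_balanced x a b c d -> farey_balanced (- x) (- c) d (- a) b.
Proof. intros [H1 H2]. unfold farey_balanced. rewrite !opp_IZR. split; lra. Qed.

(* By unimodularity (n, m) = al (b, a) + ga (d, c) with integers al, ga; since
   0 < n < b + d, one of them is positive and the other is <= 0, so the two
   gaps add up without cancellation in n x - m. *)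
Lemma farey_bracket_dist_lb (x : R) (a b c d : Z) : farey_bracket x a b c d ->
  forall n m : Z, (1 <= n)%Z -> (n < b + d)%Z ->
  Rmin (IZR b * x - IZR a) (IZR c - IZR d * x) <= Rabs (IZR n * x - IZR m).
Proof.
  intros [Hb [Hd [Hdet [Hu Hv]]]] n m Hn1 Hn2.
  set (al := (c * n - d * m)%Z). set (ga := (b * m - a * n)%Z).
  assert (En : n = (al * b + ga * d)%Z).
  { unfold al, ga. transitivity (n * (b * c - a * d))%Z; [rewrite Hdet|]; ring. }
  assert (Em : m = (al * a + ga * c)%Z).
  { unfold al, ga. transitivity (m * (b * c - a * d))%Z; [rewrite Hdet|]; ring. }
  assert (E : IZR n * x - IZR m = IZR al * (IZR b * x - IZR a) - IZR ga * (IZR c - IZR d * x)).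
  { rewrite En, Em, !plus_IZR, !mult_IZR. ring. }
  rewrite E.
  set (u := IZR b * x - IZR a) in *. set (v := IZR c - IZR d * x) in *.
  destruct (Z_le_gt_dec 1 al) as [Ha|Ha]; destruct (Z_le_gt_dec 1 ga) as [Hg|Hg];
    [exfalso; nia | | | exfalso; nia].
  - apply IZR_le in Ha. assert (Hg' : (ga <= 0)%Z) by lia. apply IZR_le in Hg'.
    apply Rle_trans with u; [apply Rmin_l|]. rewrite Rabs_right; nra.
  - apply IZR_le in Hg. assert (Ha' : (al <= 0)%Z) by lia. apply IZR_le in Ha'.
    apply Rle_trans with v; [apply Rmin_r|]. rewrite Rabs_left1; nra.
Qed.

Lemma farey_balanced_lb (x : R) (a b c d : Z) :
  farey_bracket x a b c d -> farey_balanced x a b c d ->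
  / (2 * IZR (b + d)) <= Rmin (IZR b * x - IZR a) (IZR c - IZR d * x).
Proof.
  intros [Hb [Hd [Hdet [Hu Hv]]]] [H1 H2].
  assert (E : (IZR b * x - IZR a) * IZR d + (IZR c - IZR d * x) * IZR b = 1).
  { rewrite <- Hdet, minus_IZR, !mult_IZR. ring. }
  apply IZR_le in Hb. apply IZR_le in Hd. rewrite plus_IZR.
  apply Rmin_case; apply Rmult_le_reg_r with (2 * (IZR b + IZR d)); try lra;
    rewrite Rinv_l by lra; nra.
Qed.

Lemma exists_sub_multiple_between (u v : R) : 0 < u -> u <= v ->
  exists j : Z, (0 <= j)%Z /\ u <= v - IZR j * u <= 2 * u.
Proof.
  intros Hu Huv. set (r := v / u).
  destruct (base_Int_part r) as [H1 H2].
  assert (Ev : v = r * u) by (unfold r; field; lra).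
  assert (Hr : 1 <= r) by (apply Rmult_le_reg_r with u; lra).
  exists (Int_part r - 1)%Z. rewrite minus_IZR.
  split; [|split; nra].
  assert (0 < IZR (Int_part r)) by lra. apply lt_IZR in H. lia.
Qed.

Lemma farey_balance_le (x : R) (a b c d : Z) : farey_bracket x a b c d ->
  IZR b * x - IZR a <= IZR c - IZR d * x ->
  exists c' d', farey_bracket x a b c' d' /\ farey_balanced x a b c' d' /\ (d <= d')%Z.
Proof.
  intros [Hb [Hd [Hdet [Hu Hv]]]] Huv.
  destruct (exists_sub_multiple_between _ _ Hu Huv) as [j [Hj [Hj1 Hj2]]].
  exists (c + j * a)%Z, (d + j * b)%Z. unfold farey_bracket, farey_balanced.
  replace (IZR (c + j * a) - IZR (d + j * b) * x)
    with (IZR c - IZR d * x - IZR j * (IZR b * x - IZR a))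
    by (rewrite !plus_IZR, !mult_IZR; ring).
  repeat split; try nia; lra.
Qed.

Lemma farey_balance (x : R) (a b c d : Z) : farey_bracket x a b c d ->
  exists a' b' c' d', farey_bracket x a' b' c' d' /\ farey_balanced x a' b' c' d' /\
    (b + d <= b' + d')%Z.
Proof.
  intros Hx.
  destruct (Rle_lt_dec (IZR b * x - IZR a) (IZR c - IZR d * x)) as [Huv|Hvu].
  - destruct (farey_balance_le x a b c d Hx Huv) as [c' [d' [H1 [H2 H3]]]].
    exists a, b, c', d'. split; [exact H1 | split; [exact H2 | lia]].
  - (* reflect x to -x, which swaps the two gaps *)
    assert (Hvu' : IZR d * - x - IZR (- c) <= IZR (- a) - IZR b * - x)
      by (rewrite !opp_IZR; lra).
    destruct (farey_balance_le _ _ _ _ _ (farey_bracket_opp x a b c d Hx) Hvu')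
      as [c' [d' [H1 [H2 H3]]]].
    apply farey_bracket_opp in H1. apply farey_balanced_opp in H2.
    rewrite Ropp_involutive, Z.opp_involutive in H1, H2.
    exists (- c')%Z, d', c, d. split; [exact H1 | split; [exact H2 | lia]].
Qed.

(* The value 1 at n = 0 is arbitrary; it never lies below any distZ. *)
Fixpoint min_dist (x : R) (n : nat) : R :=
  match n with
  | O => 1
  | S k => Rmin (min_dist x k) (distZ (INR (S k) * x))
  end.

Lemma min_dist_ge0 (x : R) (n : nat) : 0 <= min_dist x n.
Proof. induction n; simpl; [lra | apply Rmin_glb; [exact IHn | apply distZ_ge0]]. Qed.

Lemma min_dist_le_distZ (x : R) (n : nat) : (1 <= n)%nat -> min_dist x n <= distZ (INR n * x).
Proof. destruct n; [lia | intros _; apply Rmin_r]. Qed.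

Lemma min_dist_antitone (x : R) (m n : nat) : (m <= n)%nat -> min_dist x n <= min_dist x m.
Proof. induction 1; simpl; [lra | eapply Rle_trans; [apply Rmin_l | exact IHle]]. Qed.

Lemma min_dist_lb (x c : R) (n : nat) : c <= 1 ->
  (forall m, (1 <= m <= n)%nat -> c <= distZ (INR m * x)) -> c <= min_dist x n.
Proof.
  intros Hc Hlb. induction n; cbn [min_dist]; [exact Hc|].
  apply Rmin_glb; [apply IHn; intros; apply Hlb; lia | apply Hlb; lia].
Qed.

Section IrrationalBrackets.

Variable x : R.
Hypothesis x_irr : ~ is_rational x.

Lemma farey_bracket_init : exists a b c d, farey_bracket x a b c d.
Proof.
  destruct (base_Int_part x) as [H1 H2].
  exists (Int_part x), 1%Z, (Int_part x + 1)%Z, 1%Z.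
  assert (Hne : IZR 1 * x <> IZR (Int_part x)) by (apply irrational_mul_neq_IZR; auto; lia).
  unfold farey_bracket. rewrite plus_IZR. repeat split; try lia; lra.
Qed.

Lemma farey_bracket_mediant (a b c d : Z) : farey_bracket x a b c d ->
  exists a' b' c' d', farey_bracket x a' b' c' d' /\ (b + d < b' + d')%Z.
Proof.
  intros [Hb [Hd [Hdet [Hu Hv]]]].
  assert (Hne : IZR (b + d) * x <> IZR (a + c)) by (apply irrational_mul_neq_IZR; auto; lia).
  rewrite !plus_IZR in Hne.
  destruct (Rlt_le_dec ((IZR b + IZR d) * x) (IZR a + IZR c)) as [H|H].
  - exists a, b, (a + c)%Z, (b + d)%Z. unfold farey_bracket. rewrite !plus_IZR.
    repeat split; try lia; lra.
  - exists (a + c)%Z, (b + d)%Z, c, d. unfold farey_bracket. rewrite !plus_IZR.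
    assert (H' : (IZR b + IZR d) * x <> IZR a + IZR c) by auto.
    repeat split; try lia; lra.
Qed.

Lemma farey_bracket_large (K : nat) :
  exists a b c d, farey_bracket x a b c d /\ (Z.of_nat K <= b + d)%Z.
Proof.
  induction K as [|K [a [b [c [d [Hx HK]]]]]].
  - destruct farey_bracket_init as [a [b [c [d Hx]]]].
    exists a, b, c, d. split; [exact Hx|]. destruct Hx as [Hb [Hd _]]. lia.
  - destruct (farey_bracket_mediant a b c d Hx) as [a' [b' [c' [d' [Hx' Hlt]]]]].
    exists a', b', c', d'. split; [exact Hx' | lia].
Qed.

Lemma irrational_scale_distZ_lb (M : nat) : exists s : nat, (M <= s)%nat /\
  forall n : nat, (1 <= n)%nat -> (n < s)%nat -> / (2 * INR s) <= distZ (INR n * x).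
Proof.
  destruct (farey_bracket_large M) as [a0 [b0 [c0 [d0 [Hx0 HM]]]]].
  destruct (farey_balance x a0 b0 c0 d0 Hx0) as [a [b [c [d [Hx [Hbal Hle]]]]]].
  pose proof Hx as [Hb [Hd _]].
  exists (Z.to_nat (b + d)). split; [lia|].
  intros n Hn1 Hn2.
  destruct (distZ_attained (INR n * x)) as [m ->].
  rewrite !INR_IZR_INZ, Z2Nat.id by lia.
  eapply Rle_trans; [apply (farey_balanced_lb x a b c d Hx Hbal)|].
  apply farey_bracket_dist_lb; auto; lia.
Qed.

Lemma in_D_min_dist : in_D (min_dist x).
Proof.
  split; [intros; apply min_dist_ge0 | split; [intros; apply min_dist_antitone; lia |]].
  set (g := fun k => min_dist x (k + 1)).
  assert (Hblock : forall N, exists N', sum_f_R0 g N + / 4 <= sum_f_R0 g N').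
  { intros N. destruct (irrational_scale_distZ_lb (2 * N + 4)) as [s [Hs Hlb]].
    assert (HS : 2 * INR N + 4 <= INR s).
    { replace (2 * INR N + 4) with (INR (2 * N + 4))
        by (rewrite plus_INR, mult_INR; simpl; ring).
      apply le_INR, Hs. }
    pose proof (pos_INR N).
    assert (Hg : forall k, (N < k <= N + (s - 2 - N))%nat -> / (2 * INR s) <= g k).
    { intros k Hk. apply min_dist_lb; [|intros m Hm; apply Hlb; lia].
      apply Rle_trans with (/ 1); [apply Rinv_le_contravar; lra | rewrite Rinv_1; lra]. }
    exists (N + (s - 2 - N))%nat.
    eapply Rle_trans; [|apply (sum_f_R0_block g _ N _ Hg)].
    apply Rplus_le_compat_l.
    rewrite !minus_INR by lia. simpl (INR 2).
    (* (s - 2 - N) / (2 s) >= 1/4 because s >= 2 N + 4 *)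
    assert (Hw : 2 * INR s * / (2 * INR s) = 1) by (apply Rinv_r; lra).
    assert (0 < / (2 * INR s)) by (apply Rinv_0_lt_compat; lra).
    nra. }
  intros M. destruct (sum_f_R0_unbounded g (/ 4) ltac:(lra) Hblock M) as [N HN].
  exists (S N). unfold sum_f. replace (S N - 1)%nat with N by lia. exact HN.
Qed.

End IrrationalBrackets.

Lemma not_in_Pi_irrational_rational (x y : R) : ~ is_rational x -> is_rational y ->
  ~ in_Pi x y.
Proof.
  intros Hx [a [b [Hb Hy]]].
  assert (Hb0 : 0 < IZR b) by (apply IZR_lt; lia).
  assert (Hbx : ~ is_rational (IZR b * x)).
  { intros [p [q [Hq E]]]. apply Hx. exists p, (b * q)%Z. split; [nia|].
    rewrite mult_IZR. apply Rmult_eq_reg_l with (IZR b); [|lra].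
    rewrite E. field. split; apply not_0_IZR; lia. }
  apply (not_in_Pi_of_le_distZ x y _ (in_D_div _ _ (in_D_min_dist _ Hbx) Hb0)).
  intros n Hn.
  assert (E : INR n * (IZR b * x) = IZR b * (INR n * x + y) + IZR (- a)).
  { rewrite opp_IZR, Hy. field. lra. }
  pose proof (min_dist_le_distZ (IZR b * x) n Hn) as Hmin.
  pose proof (distZ_mul_le b (INR n * x + y)) as Hmul.
  rewrite E, distZ_add_IZR in Hmin. rewrite Rabs_pos_eq in Hmul by lra.
  apply Rmult_le_reg_l with (IZR b); [lra|]. unfold Rdiv.
  rewrite Rmult_comm, Rmult_assoc, Rinv_l, Rmult_1_r by lra. lra.
Qed.

Lemma in_Pi_iff_of_rational (x y : R) : is_rational x \/ is_rational y ->
  in_Pi x y <-> is_rational x /\ is_rational y /\ orbit_hits_Z x y.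
Proof.
  intros Hxy. split.
  - intros HPi.
    destruct (classic (is_rational x)) as [Hx|Hx], (classic (is_rational y)) as [Hy|Hy].
    + split; [exact Hx | split; [exact Hy |]].
      apply NNPP. intros Hmiss. exact (not_in_Pi_rational_miss x y Hx Hy Hmiss HPi).
    + exact (False_ind _ (not_in_Pi_rational_irrational x y Hx Hy HPi)).
    + exact (False_ind _ (not_in_Pi_irrational_rational x y Hx Hy HPi)).
    + tauto.
  - intros [Hx [_ Hhit]]. exact (in_Pi_of_orbit_hits_Z x y Hx Hhit).
Qed.

Theorem proposition20 :
  (forall y : R, is_rational y ->
     forall x : R, Pi_y y x <-> (is_rational x /\ orbit_hits_Z x y)) /\
  (forall x : R, is_rational x ->
     forall y : R, Phi x y <-> (is_rational y /\ orbit_hits_Z x y)).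
Proof.
  split.
  - intros y Hy x. unfold Pi_y. rewrite in_Pi_iff_of_rational by tauto. tauto.
  - intros x Hx y. unfold Phi. rewrite in_Pi_iff_of_rational by tauto. tauto.
Qed.
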